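(* Let $P$ be a finite ranked poset with rank function $\mathrm{rk}$. Let $R_1$ and $R_2$ be restriction functions on $P$ related by $R_1(p)=\{k+\mathrm{rk}(p):k\in R_2(p)\}$ for all $p\in P$. Then $R_1$ is consistent if and only if $R_2$ is weakly-consistent. Moreover, in this case $\Gamma(P,R_1)$ is isomorphic to $\Gamma'(P,R_2)$.
   Context: $P$ is ranked with rank function $\mathrm{rk}:P\to\mathbb{Z}$ if $x\lessdot y$ implies $\mathrm{rk}(y)=\mathrm{rk}(x)+1$. A restriction function assigns to each $p$ a nonempty finite subset of $\mathbb{Z}$. $R$ is consistent (resp. weakly-consistent) if for every cover $x\lessdot y$, $\min R(x)<\min R(y)$ and $\max R(x)<\max R(y)$ (resp. with $\le$ in place of $<$). $R(p)^*=R(p)\setminus\{\max R(p)\}$; $R(p)_{>k}$ is the smallest element of $R(p)$ greater than $k$; $R(p)_{<k}$ (resp. $R(p)_{\le k}$) is the largest element of $R(p)$ less than (resp. at most) $k$. $\Gamma(P,R)$ (for consistent $R$) is the poset on $\{(p,k):k\in R(p)^*\}$ whose order is the reflexive–transitive closure of: $(p_1,k_1)\lessdot(p_2,k_2)$ iff (1) $p_1=p_2$ and $R(p_1)_{>k_2}=k_1$, or (2) $p_1\lessdot p_2$, $k_1=R(p_1)_{<k_2}$, $k_1\ne\max R(p_1)$, and no $k\in R(p_2)$, $k>k_2$, has $R(p_1)_{<k}=k_1$. $\Gamma'(P,R)$ (for weakly-consistent $R$) is defined on the same kind of set by: (1) $p_1=p_2$ and $R(p_1)_{>k_2}=k_1$,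 or (2) $p_1\lessdot p_2$, $R(p_1)_{\le k_2}=k_1$, and no $k\in R(p_2)$, $k>k_2$, has $R(p_1)_{\le k}=k_1$. *)

From HB Require Import structures.
From mathcomp Require Import all_boot all_order all_algebra.
From mathcomp Require Import finmap.
From Stdlib Require Import Relation_Operators.
Set Implicit Arguments. Unset Strict Implicit. Unset Printing Implicit Defensive.
Import Order.TTheory GRing.Theory Num.Theory.
Local Open Scope fset_scope.
Local Open Scope ring_scope.

Section Defs.
Context {d : Order.disp_t} {P : finPOrderType d}.

Definition covers (x y : P) : Prop :=
  (x < y)%O /\ forall z : P, ~ ((x < z)%O /\ (z < y)%O).

Definition ranked (rk : P -> int) : Prop :=
  forall x y, covers x y -> rk y = rk x + 1.

Definition is_restriction (R : P -> {fset int}) : Prop :=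
  forall p, R p != fset0.

Definition is_minA (A : {fset int}) (m : int) : Prop :=
  m \in A /\ forall k, k \in A -> m <= k.
Definition is_maxA (A : {fset int}) (m : int) : Prop :=
  m \in A /\ forall k, k \in A -> k <= m.

Definition succA (A : {fset int}) (k j : int) : Prop :=
  j \in A /\ k < j /\ forall i, i \in A -> k < i -> j <= i.
Definition predA (A : {fset int}) (k j : int) : Prop :=
  j \in A /\ j < k /\ forall i, i \in A -> i < k -> i <= j.
Definition predeqA (A : {fset int}) (k j : int) : Prop :=
  j \in A /\ j <= k /\ forall i, i \in A -> i <= k -> i <= j.

Definition consistent (R : P -> {fset int}) : Prop :=
  forall x y, covers x y ->
    (forall m1 m2, is_minA (R x) m1 -> is_minA (R y) m2 -> m1 < m2) /\
    (forall M1 M2, is_maxA (R x) M1 -> is_maxA (R y) M2 -> M1 < M2).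

Definition weakly_consistent (R : P -> {fset int}) : Prop :=
  forall x y, covers x y ->
    (forall m1 m2, is_minA (R x) m1 -> is_minA (R y) m2 -> m1 <= m2) /\
    (forall M1 M2, is_maxA (R x) M1 -> is_maxA (R y) M2 -> M1 <= M2).

Definition gamma_elt (R : P -> {fset int}) (a : P * int) : Prop :=
  a.2 \in R a.1 /\ ~ is_maxA (R a.1) a.2.

Definition gamma_gen (R : P -> {fset int}) (a b : P * int) : Prop :=
  gamma_elt R a /\ gamma_elt R b /\
  let: (p1, k1) := a in let: (p2, k2) := b in
  ((p1 = p2 /\ succA (R p1) k2 k1) \/
   (covers p1 p2 /\ predA (R p1) k2 k1 /\ ~ is_maxA (R p1) k1 /\
    ~ (exists k, k \in R p2 /\ k2 < k /\ predA (R p1) k k1))).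

Definition gamma'_gen (R : P -> {fset int}) (a b : P * int) : Prop :=
  gamma_elt R a /\ gamma_elt R b /\
  let: (p1, k1) := a in let: (p2, k2) := b in
  ((p1 = p2 /\ succA (R p1) k2 k1) \/
   (covers p1 p2 /\ predeqA (R p1) k2 k1 /\
    ~ (exists k, k \in R p2 /\ k2 < k /\ predeqA (R p1) k k1))).

Definition gamma_le (R : P -> {fset int}) : P * int -> P * int -> Prop :=
  @clos_refl_trans (P * int) (gamma_gen R).
Definition gamma'_le (R : P -> {fset int}) : P * int -> P * int -> Prop :=
  @clos_refl_trans (P * int) (gamma'_gen R).

End Defs.

Definition poset_iso {T1 T2 : Type}
  (E1 : T1 -> Prop) (le1 : T1 -> T1 -> Prop)
  (E2 : T2 -> Prop) (le2 : T2 -> T2 -> Prop) : Prop :=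
  exists f : T1 -> T2,
    (forall a, E1 a -> E2 (f a)) /\
    (forall a b, E1 a -> E1 b -> f a = f b -> a = b) /\
    (forall c, E2 c -> exists a, E1 a /\ f a = c) /\
    (forall a b, E1 a -> E1 b -> (le1 a b <-> le2 (f a) (f b))).

From HB Require Import structures.
From mathcomp Require Import all_boot all_order all_algebra.
From mathcomp Require Import finmap.
From mathcomp Require Import zify.
From Stdlib Require Import Relation_Definitions Relation_Operators.
Import Order.TTheory GRing.Theory Num.Theory.
Local Open Scope fset_scope.
Local Open Scope ring_scope.

(* The isomorphism is (p, k) |-> (p, k - rk p), which maps R1 p onto R2 p.
   Along a cover x ⋖ y the rank grows by exactly 1, so for integers a, b
   we have a < b iff a - rk x <= b - rk y: strict comparisons between
   consecutive ranks in R1 become weak ones in R2.  This gives the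
   equivalence of the consistency conditions, and, together with
   A_{<k} = A_{<=k-1} on integers, it matches the cover relations of
   Gamma(P, R1) and Gamma'(P, R2). *)

Lemma predA_predeqA (A : {fset int}) k j : predA A k j <-> predeqA A (k - 1) j.
Proof.
rewrite /predA /predeqA; split=> -[jA [jk maxj]]; split=> //.
  by split=> [|i iA ik]; [lia | apply: maxj => //; lia].
by split=> [|i iA ik]; [lia | apply: maxj => //; lia].
Qed.

Section Translate.
Context {A B : {fset int}} {c : int}.
Hypothesis memA : forall x, (x \in A) = (x - c \in B).

Let memB y : (y \in B) = (y + c \in A).
Proof. by rewrite memA addrK. Qed.

Lemma is_minA_translate m : is_minA A m <-> is_minA B (m - c).
Proof.
rewrite /is_minA -memA; split=> -[mA minm]; split=> // k.
  by rewrite memB => /minm; lia.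
by rewrite memA => /minm; lia.
Qed.

Lemma is_maxA_translate m : is_maxA A m <-> is_maxA B (m - c).
Proof.
rewrite /is_maxA -memA; split=> -[mA maxm]; split=> // k.
  by rewrite memB => /maxm; lia.
by rewrite memA => /maxm; lia.
Qed.

Lemma succA_translate k j : succA A k j <-> succA B (k - c) (j - c).
Proof.
rewrite /succA -memA; split=> -[jA [kj minj]]; split=> //.
  by split=> [|i]; [lia | rewrite memB => /minj; lia].
by split=> [|i]; [lia | rewrite memA => /minj; lia].
Qed.

Lemma predeqA_translate k j : predeqA A k j <-> predeqA B (k - c) (j - c).
Proof.
rewrite /predeqA -memA; split=> -[jA [jk maxj]]; split=> //.
  by split=> [|i]; [lia | rewrite memB => /maxj; lia].
by split=> [|i]; [lia | rewrite memA => /maxj; lia].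
Qed.

End Translate.

Lemma clos_refl_trans_map {T1 T2 : Type} {r1 : relation T1} {r2 : relation T2}
    (f : T1 -> T2) :
  (forall a b, r1 a b -> r2 (f a) (f b)) ->
  forall a b, clos_refl_trans _ r1 a b -> clos_refl_trans _ r2 (f a) (f b).
Proof.
move=> f_hom a b; elim=> [x y /f_hom | x | x y z _ IHxy _ IHyz].
- exact: rt_step.
- exact: rt_refl.
- exact: rt_trans IHxy IHyz.
Qed.

Lemma poset_iso_clos_refl_trans {T1 T2 : Type} {E1 : T1 -> Prop} {E2 : T2 -> Prop}
    {r1 : relation T1} {r2 : relation T2} {f : T1 -> T2} {g : T2 -> T1} :
  cancel f g -> cancel g f ->
  (forall a, E1 a <-> E2 (f a)) -> (forall a b, r1 a b <-> r2 (f a) (f b)) ->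
  poset_iso E1 (clos_refl_trans _ r1) E2 (clos_refl_trans _ r2).
Proof.
move=> fK gK Ef rf; exists f; split; first by move=> a /Ef.
split; first by move=> a b _ _ /(can_inj fK).
split.
  by move=> c Ec; exists (g c); rewrite gK; split=> //; apply/Ef; rewrite gK.
move=> a b _ _; split; first by apply: clos_refl_trans_map => x y /rf.
rewrite -{2}(fK a) -{2}(fK b); apply: clos_refl_trans_map => x y rxy.
by apply/rf; rewrite !gK.
Qed.

Section RankShift.
Context {d : Order.disp_t} {P : finPOrderType d}.
Context {rk : P -> int} {R1 R2 : P -> {fset int}}.
Hypothesis rk_ranked : ranked rk.
Hypothesis R1_shift : forall p, R1 p = [fset (k + rk p) | k in R2 p].

Lemma mem_R1 p x : (x \in R1 p) = (x - rk p \in R2 p).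
Proof.
rewrite R1_shift; apply/imfsetP/idP => [[k kR2 ->] | xR2]; first by rewrite addrK.
by exists (x - rk p); rewrite ?subrK.
Qed.

Lemma cover_extrema_lt_shift {ext : {fset int} -> int -> Prop} :
  (forall (A B : {fset int}) (c : int), (forall x, (x \in A) = (x - c \in B)) ->
     forall m, ext A m <-> ext B (m - c)) ->
  forall x y, covers x y ->
  (forall m1 m2, ext (R1 x) m1 -> ext (R1 y) m2 -> m1 < m2) <->
  (forall m1 m2, ext (R2 x) m1 -> ext (R2 y) m2 -> m1 <= m2).
Proof.
move=> ext_translate x y /rk_ranked rky.
have ext_R1 p m : ext (R1 p) m <-> ext (R2 p) (m - rk p).
  exact: ext_translate (mem_R1 p) m.
split=> lt12 m1 m2 => [e1 e2 | /ext_R1 e1 /ext_R1 e2].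
  have := lt12 (m1 + rk x) (m2 + rk y); rewrite !ext_R1 !addrK => /(_ e1 e2); lia.
by have := lt12 _ _ e1 e2; lia.
Qed.

Lemma consistent_iff_weakly_consistent : consistent R1 <-> weakly_consistent R2.
Proof.
split=> cons x y cxy; have [cons_min cons_max] := cons x y cxy; split.
- exact: (cover_extrema_lt_shift (@is_minA_translate) _ _ cxy).1 cons_min.
- exact: (cover_extrema_lt_shift (@is_maxA_translate) _ _ cxy).1 cons_max.
- exact: (cover_extrema_lt_shift (@is_minA_translate) _ _ cxy).2 cons_min.
- exact: (cover_extrema_lt_shift (@is_maxA_translate) _ _ cxy).2 cons_max.
Qed.

Definition unshift (a : P * int) : P * int := (a.1, a.2 - rk a.1).
Definition shift (a : P * int) : P * int := (a.1, a.2 + rk a.1).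

Lemma unshiftK : cancel unshift shift.
Proof. by case=> p k; rewrite /shift /= subrK. Qed.

Lemma shiftK : cancel shift unshift.
Proof. by case=> p k; rewrite /unshift /= addrK. Qed.

Lemma gamma_elt_unshift a : gamma_elt R1 a <-> gamma_elt R2 (unshift a).
Proof. by case: a => p k; rewrite /gamma_elt /= mem_R1 (is_maxA_translate (mem_R1 p)). Qed.

Lemma succA_R1 p k j : succA (R1 p) k j <-> succA (R2 p) (k - rk p) (j - rk p).
Proof. exact: succA_translate (mem_R1 p) k j. Qed.

Lemma predA_R1_cover {p1 p2} : covers p1 p2 -> forall k j,
  predA (R1 p1) k j <-> predeqA (R2 p1) (k - rk p2) (j - rk p1).
Proof.
move=> /rk_ranked -> k j; rewrite predA_predeqA (predeqA_translate (mem_R1 p1)).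
by have -> : k - 1 - rk p1 = k - (rk p1 + 1) by lia.
Qed.

Lemma exists_predA_R1_cover {p1 p2} : covers p1 p2 -> forall k2 j,
  (exists k, k \in R1 p2 /\ k2 < k /\ predA (R1 p1) k j) <->
  (exists k, k \in R2 p2 /\ k2 - rk p2 < k /\ predeqA (R2 p1) k (j - rk p1)).
Proof.
move=> cv k2 j; split=> -[k [kR [k2k predk]]].
  exists (k - rk p2); rewrite -mem_R1 -(predA_R1_cover cv).
  by split=> //; split=> //; lia.
exists (k + rk p2); rewrite mem_R1 (predA_R1_cover cv) addrK.
by split=> //; split=> //; lia.
Qed.

Lemma gamma_gen_unshift a b :
  gamma_gen R1 a b <-> gamma'_gen R2 (unshift a) (unshift b).
Proof.
rewrite /gamma_gen /gamma'_gen -!gamma_elt_unshift.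
case: a b => [p1 k1] [p2 k2] /=; split=> -[ea [eb gen]]; do 2!split=> //.
- case: gen => [[<- succ] | [cv [pred [_ no_later]]]]; [left | right].
    by split=> //; apply/succA_R1.
  by split=> //; rewrite -(predA_R1_cover cv) -(exists_predA_R1_cover cv).
- case: gen => [[<- succ] | [cv [pred no_later]]]; [left | right].
    by split=> //; apply/succA_R1.
  move: pred no_later; rewrite -(predA_R1_cover cv) -(exists_predA_R1_cover cv).
  by case: ea.
Qed.

End RankShift.

Theorem theorem2p26 (d : Order.disp_t) (P : finPOrderType d)
  (rk : P -> int) (R1 R2 : P -> {fset int}) :
  ranked rk -> is_restriction R1 -> is_restriction R2 ->
  (forall p, R1 p = [fset (k + rk p) | k in R2 p]) ->
  (consistent R1 <-> weakly_consistent R2) /\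
  (consistent R1 ->
     poset_iso (gamma_elt R1) (gamma_le R1) (gamma_elt R2) (gamma'_le R2)).
Proof.
move=> rk_ranked _ _ R1_shift.
split; first exact: consistent_iff_weakly_consistent rk_ranked R1_shift.
move=> _; apply: (poset_iso_clos_refl_trans (unshiftK (rk := rk)) shiftK).
- exact: gamma_elt_unshift R1_shift.
- exact: gamma_gen_unshift rk_ranked R1_shift.
Qed.
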